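(* An elementary pair $M\prec N$ of models of Presburger arithmetic is stably embedded if and only if $N$ is an end-extension of $M$. In particular, the class of stably embedded pairs of models of Presburger arithmetic is elementary in the language of pairs $\mathcal L_P$.
   Context: The pair $M\prec N$ is stably embedded if for every $\mathcal L(N)$-definable $X\subseteq N^n$, $X\cap M^n$ is $\mathcal L(M)$-definable. $N$ is an end-extension of $M$ if no element of $N\setminus M$ lies between two elements of $M$ (every element of $N\setminus M$ is above all of $M$ or below all of $M$). $\mathcal L_P$ extends the Presburger language by a unary predicate $P$ interpreted as $M$. *)

From Stdlib Require Import ZArith Arith.

(* Presburger language {0, 1, +, -, <} (equality is interpreted as Leibniz
   equality on the carrier). *)
Record Lstruct := {
  car :> Type;
  s_zero : car;
  s_one : car;
  s_add : car -> car -> car;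
  s_opp : car -> car;
  s_lt : car -> car -> Prop
}.

Inductive term : Type :=
| TVar : nat -> term
| TZero : term
| TOne : term
| TAdd : term -> term -> term
| TOpp : term -> term.

Inductive form : Type :=
| FEq : term -> term -> form
| FLt : term -> term -> form
| FBot : form
| FNot : form -> form
| FAnd : form -> form -> form
| FOr : form -> form -> form
| FImp : form -> form -> form
| FAll : nat -> form -> form
| FEx : nat -> form -> form.

Inductive formP : Type :=
| PEq : term -> term -> formP
| PLt : term -> term -> formP
| PMem : term -> formP
| PBot : formP
| PNot : formP -> formP
| PAnd : formP -> formP -> formP
| POr : formP -> formP -> formP
| PImp : formP -> formP -> formP
| PAll : nat -> formP -> formP
| PEx : nat -> formP -> formP.

Definition upd {T : Type} (e : nat -> T) (i : nat) (x : T) : nat -> T :=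
  fun j => if Nat.eqb j i then x else e j.

Fixpoint eval (S : Lstruct) (e : nat -> S) (t : term) : S :=
  match t with
  | TVar i => e i
  | TZero => s_zero S
  | TOne => s_one S
  | TAdd t1 t2 => s_add S (eval S e t1) (eval S e t2)
  | TOpp t1 => s_opp S (eval S e t1)
  end.

Fixpoint sat (S : Lstruct) (e : nat -> S) (phi : form) : Prop :=
  match phi with
  | FEq t1 t2 => eval S e t1 = eval S e t2
  | FLt t1 t2 => s_lt S (eval S e t1) (eval S e t2)
  | FBot => False
  | FNot p => ~ sat S e p
  | FAnd p q => sat S e p /\ sat S e q
  | FOr p q => sat S e p \/ sat S e q
  | FImp p q => sat S e p -> sat S e q
  | FAll i p => forall x : S, sat S (upd e i x) p
  | FEx i p => exists x : S, sat S (upd e i x) p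
  end.

Fixpoint satP (S : Lstruct) (P : S -> Prop) (e : nat -> S) (phi : formP) : Prop :=
  match phi with
  | PEq t1 t2 => eval S e t1 = eval S e t2
  | PLt t1 t2 => s_lt S (eval S e t1) (eval S e t2)
  | PMem t => P (eval S e t)
  | PBot => False
  | PNot p => ~ satP S P e p
  | PAnd p q => satP S P e p /\ satP S P e q
  | POr p q => satP S P e p \/ satP S P e q
  | PImp p q => satP S P e p -> satP S P e q
  | PAll i p => forall x : S, satP S P (upd e i x) p
  | PEx i p => exists x : S, satP S P (upd e i x) p
  end.

Definition Zstruct : Lstruct :=
  {| car := Z; s_zero := 0%Z; s_one := 1%Z; s_add := Z.add;
     s_opp := Z.opp; s_lt := Z.lt |}.

(* Models of Presburger arithmetic = models of Th(Z, 0, 1, +, -, <):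
   every formula valid in Z (i.e. whose universal closure is true in Z)
   is valid in S. *)
Definition Presburger_model (S : Lstruct) : Prop :=
  forall phi : form, (forall e : nat -> Zstruct, sat Zstruct e phi) ->
    forall e : nat -> S, sat S e phi.

(* f : M -> N is an elementary embedding, i.e. M ≺ N (identifying M
   with its image). *)
Definition elementary_map (M N : Lstruct) (f : M -> N) : Prop :=
  forall (phi : form) (e : nat -> M), sat M e phi <-> sat N (fun i => f (e i)) phi.

Definition merge {T : Type} (n : nat) (a e : nat -> T) : nat -> T :=
  fun i => if Nat.ltb i n then a i else e i.

(* Stable embeddedness: for every L(N)-definable X ⊆ N^n (defined by phi
   with free variables 0..n-1 and parameters given by b), X ∩ M^n is
   L(M)-definable in M (by psi with parameters c from M). *)
Definition stably_embedded (M N : Lstruct) (f : M -> N) : Prop :=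
  forall (n : nat) (phi : form) (b : nat -> N),
    exists (psi : form) (c : nat -> M),
      forall a : nat -> M,
        sat N (merge n (fun i => f (a i)) b) phi <-> sat M (merge n a c) psi.

Definition end_extension (M N : Lstruct) (f : M -> N) : Prop :=
  forall y : N, (exists x : M, f x = y) \/
                (forall x : M, s_lt N (f x) y) \/
                (forall x : M, s_lt N y (f x)).

(* By Cooper's quantifier elimination, every formula is equivalent in Th(Z, 0, 1, +, -, <)
   to a boolean combination of atoms [0 < t] and [k | t] with t linear, hence also in every
   model of Presburger arithmetic.  For arguments a from M and parameters from N such an
   atom reads [0 < t(a) + s] or [k | t(a) + s] with s in N; when N end-extends M, each is
   equivalent to an atom over M, so traces of N-definable sets are M-definable.
   Conversely, if y in N \ M lay strictly between elements of M, the M-definable set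
   {z in M | z < y} would have a last element m (the discrete intermediate value property
   transfers from Z to M), and m < y <= m + 1 would force y = m + 1 in M.
   Finally, pairs (N, M) with M stably embedded are axiomatised in L_P by Th(Z), the
   Tarski-Vaught scheme for P and the end-extension axiom. *)

From Stdlib Require Import ZArith Lia List Classical ProofIrrelevance.
Import ListNotations.

Lemma upd_same {T} (e : nat -> T) i x : upd e i x i = x.
Proof. unfold upd; now rewrite Nat.eqb_refl. Qed.

Lemma upd_other {T} (e : nat -> T) i j x : j <> i -> upd e i x j = e j.
Proof. intro H; unfold upd; apply Nat.eqb_neq in H; now rewrite H. Qed.

Open Scope Z_scope.

(* [(c, [(i1, a1); ...; (ik, ak)])] stands for [c + a1 x_i1 + ... + ak x_ik];
   a variable may occur several times. *)
Definition lin := (Z * list (nat * Z))%type.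

Fixpoint sum_list (e : nat -> Z) (l : list (nat * Z)) : Z :=
  match l with [] => 0 | (i, a) :: l' => a * e i + sum_list e l' end.
Fixpoint coef_list (x : nat) (l : list (nat * Z)) : Z :=
  match l with [] => 0 | (i, a) :: l' => (if Nat.eqb i x then a else 0) + coef_list x l' end.
Definition drop_list (x : nat) (l : list (nat * Z)) : list (nat * Z) :=
  filter (fun p => negb (Nat.eqb (fst p) x)) l.
Definition scale_list (m : Z) (l : list (nat * Z)) : list (nat * Z) :=
  map (fun p => (fst p, m * snd p)) l.

Definition leval (e : nat -> Z) (t : lin) : Z := fst t + sum_list e (snd t).
Definition lcoef (x : nat) (t : lin) : Z := coef_list x (snd t).
Definition ldrop (x : nat) (t : lin) : lin := (fst t, drop_list x (snd t)).
Definition lconst (c : Z) : lin := (c, []).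
Definition lvar (x : nat) : lin := (0, [(x, 1)]).
Definition ladd (t u : lin) : lin := (fst t + fst u, snd t ++ snd u).
Definition lscale (m : Z) (t : lin) : lin := (m * fst t, scale_list m (snd t)).
Definition lneg (t : lin) : lin := lscale (-1) t.
Definition lsubst (x : nat) (s t : lin) : lin := ladd (ldrop x t) (lscale (lcoef x t) s).

Lemma leval_const e c : leval e (lconst c) = c.
Proof. unfold leval; simpl; lia. Qed.

Lemma leval_var e x : leval e (lvar x) = e x.
Proof. unfold leval, lvar; cbn [fst snd sum_list]; lia. Qed.

Lemma leval_add e t u : leval e (ladd t u) = leval e t + leval e u.
Proof.
  unfold leval, ladd; simpl.
  induction (snd t) as [|[i a] l IH]; simpl; lia.
Qed.

Lemma leval_scale e m t : leval e (lscale m t) = m * leval e t.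
Proof.
  unfold leval, lscale; simpl.
  induction (snd t) as [|[i a] l IH]; simpl; lia.
Qed.

Lemma leval_neg e t : leval e (lneg t) = - leval e t.
Proof. unfold lneg; rewrite leval_scale; lia. Qed.

Lemma lcoef_var x : lcoef x (lvar x) = 1.
Proof. unfold lcoef; simpl; now rewrite Nat.eqb_refl. Qed.

Lemma lcoef_add x t u : lcoef x (ladd t u) = lcoef x t + lcoef x u.
Proof.
  unfold lcoef, ladd; simpl.
  induction (snd t) as [|[i a] l IH]; simpl; lia.
Qed.

Lemma lcoef_scale x m t : lcoef x (lscale m t) = m * lcoef x t.
Proof.
  unfold lcoef, lscale; simpl.
  induction (snd t) as [|[i a] l IH]; simpl; [lia|].
  destruct (Nat.eqb i x); lia.
Qed.

Lemma lcoef_drop x t : lcoef x (ldrop x t) = 0.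
Proof.
  unfold lcoef, ldrop; simpl.
  induction (snd t) as [|[i a] l IH]; simpl; [lia|].
  destruct (Nat.eqb i x) eqn:E; simpl; rewrite ?E; lia.
Qed.

Lemma ldrop_idem x t : ldrop x (ldrop x t) = ldrop x t.
Proof.
  unfold ldrop; simpl; f_equal.
  induction (snd t) as [|[i a] l IH]; simpl; [reflexivity|].
  destruct (Nat.eqb i x) eqn:E; simpl; rewrite ?E; simpl; congruence.
Qed.

Lemma leval_upd e x v t : leval (upd e x v) t = lcoef x t * v + leval e (ldrop x t).
Proof.
  unfold leval, lcoef, ldrop; simpl.
  induction (snd t) as [|[i a] l IH]; simpl; [lia|].
  destruct (Nat.eqb i x) eqn:E; simpl.
  - apply Nat.eqb_eq in E; subst. rewrite upd_same. lia.
  - rewrite upd_other by (now apply Nat.eqb_neq). lia.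
Qed.

Lemma leval_upd_indep e x v w t : lcoef x t = 0 -> leval (upd e x v) t = leval (upd e x w) t.
Proof. intro H; rewrite !leval_upd, H; lia. Qed.

Lemma leval_upd_shift e x v m D t :
  leval (upd e x (v + m * D)) t = leval (upd e x v) t + lcoef x t * m * D.
Proof. rewrite !leval_upd; lia. Qed.

Lemma leval_subst e x s t : leval e (lsubst x s t) = leval (upd e x (leval e s)) t.
Proof. unfold lsubst; rewrite leval_add, leval_scale, leval_upd; lia. Qed.

Inductive qf : Type :=
| QT | QF
| QLt (t : lin)
| QDv (k : positive) (t : lin)
| QNDv (k : positive) (t : lin)
| QAnd (a b : qf) | QOr (a b : qf).

Fixpoint qsem (e : nat -> Z) (q : qf) : Prop :=
  match q with
  | QT => True
  | QF => False
  | QLt t => 0 < leval e t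
  | QDv k t => (Z.pos k | leval e t)
  | QNDv k t => ~ (Z.pos k | leval e t)
  | QAnd a b => qsem e a /\ qsem e b
  | QOr a b => qsem e a \/ qsem e b
  end.

Fixpoint qneg (q : qf) : qf :=
  match q with
  | QT => QF
  | QF => QT
  | QLt t => QLt (ladd (lconst 1) (lneg t))
  | QDv k t => QNDv k t
  | QNDv k t => QDv k t
  | QAnd a b => QOr (qneg a) (qneg b)
  | QOr a b => QAnd (qneg a) (qneg b)
  end.

Lemma qneg_sem e q : qsem e (qneg q) <-> ~ qsem e q.
Proof.
  induction q; simpl; rewrite ?IHq1, ?IHq2; try tauto.
  rewrite leval_add, leval_const, leval_neg; lia.
Qed.

Fixpoint atoms (q : qf) : list qf :=
  match q with QAnd a b | QOr a b => atoms a ++ atoms b | _ => [q] end.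

Definition isatom (a : qf) : Prop :=
  match a with QAnd _ _ | QOr _ _ => False | _ => True end.

Lemma atoms_isatom q a : In a (atoms q) -> isatom a.
Proof.
  induction q; simpl; intro H; try (destruct H as [<-|[]]; exact I);
    apply in_app_or in H; tauto.
Qed.

Fixpoint qmap (g : qf -> qf) (q : qf) : qf :=
  match q with
  | QAnd a b => QAnd (qmap g a) (qmap g b)
  | QOr a b => QOr (qmap g a) (qmap g b)
  | _ => g q
  end.

Lemma qmap_sem g e1 e2 q :
  (forall a, In a (atoms q) -> (qsem e1 (g a) <-> qsem e2 a)) ->
  (qsem e1 (qmap g q) <-> qsem e2 q).
Proof.
  induction q; simpl; intro H; try (apply H; now left);
    rewrite IHq1, IHq2; try tauto; intros; apply H, in_or_app; auto.
Qed.

Lemma qmap_congr g e1 e2 q :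
  (forall a, In a (atoms q) -> (qsem e1 (g a) <-> qsem e2 (g a))) ->
  (qsem e1 (qmap g q) <-> qsem e2 (qmap g q)).
Proof.
  induction q; simpl; intro H; try (apply H; now left);
    rewrite IHq1, IHq2; try tauto; intros; apply H, in_or_app; auto.
Qed.

Lemma atoms_qmap g q :
  (forall a, isatom a -> atoms (g a) = [g a]) ->
  forall a, In a (atoms (qmap g q)) -> exists a0, In a0 (atoms q) /\ a = g a0.
Proof.
  intro Hg; induction q; simpl; intros a Ha.
  1-5: rewrite Hg in Ha by exact I; destruct Ha as [<-|[]];
    eexists; split; [left|]; reflexivity.
  all: apply in_app_or in Ha; destruct Ha as [Ha|Ha];
    [destruct (IHq1 _ Ha) as [a0 [? ?]] | destruct (IHq2 _ Ha) as [a0 [? ?]]];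
    exists a0; split; auto; apply in_or_app; auto.
Qed.

Lemma qsem_mono e1 e2 q :
  (forall a, In a (atoms q) -> qsem e1 a -> qsem e2 a) -> qsem e1 q -> qsem e2 q.
Proof.
  induction q; intro H; try exact (H _ (or_introl eq_refl)); simpl in *;
    (assert (H1 : forall a, In a (atoms q1) -> qsem e1 a -> qsem e2 a)
       by (intros; apply H; auto; apply in_or_app; auto));
    (assert (H2 : forall a, In a (atoms q2) -> qsem e1 a -> qsem e2 a)
       by (intros; apply H; auto; apply in_or_app; auto));
    specialize (IHq1 H1); specialize (IHq2 H2); tauto.
Qed.

Definition asubst x s (a : qf) : qf :=
  match a with
  | QLt t => QLt (lsubst x s t)
  | QDv k t => QDv k (lsubst x s t)
  | QNDv k t => QNDv k (lsubst x s t)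
  | _ => a
  end.
Definition qsubst x s q := qmap (asubst x s) q.

Lemma qsubst_sem e x s q : qsem e (qsubst x s q) <-> qsem (upd e x (leval e s)) q.
Proof.
  apply qmap_sem; intros a Ha; apply atoms_isatom in Ha.
  destruct a; simpl in *; rewrite ?leval_subst; tauto.
Qed.

Fixpoint bigor (l : list qf) : qf :=
  match l with [] => QF | a :: l' => QOr a (bigor l') end.

Lemma bigor_sem e l : qsem e (bigor l) <-> exists a, In a l /\ qsem e a.
Proof.
  induction l as [|a l IH]; simpl; [firstorder|].
  rewrite IH; split.
  - intros [H|[b [? ?]]]; eauto.
  - intros [b [[<-|H] H2]]; eauto.
Qed.

(** * Cooper's quantifier elimination *)

Definition atom_coef x (a : qf) : Z :=
  match a with QLt t | QDv _ t | QNDv _ t => lcoef x t | _ => 0 end.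

Definition unit_coefs x q := forall a, In a (atoms q) -> -1 <= atom_coef x a <= 1.

Definition coef_prod x (l : list qf) : Z :=
  fold_right (fun a acc => (if atom_coef x a =? 0 then 1 else Z.abs (atom_coef x a)) * acc) 1 l.

Lemma coef_prod_pos x l : 0 < coef_prod x l.
Proof.
  induction l as [|a l IH]; simpl; [lia|].
  destruct (atom_coef x a =? 0) eqn:E; [lia|]. apply Z.eqb_neq in E. nia.
Qed.

Lemma coef_prod_dvd x l a :
  In a l -> atom_coef x a <> 0 -> (Z.abs (atom_coef x a) | coef_prod x l).
Proof.
  induction l as [|b l IH]; simpl; intros H Hc; [destruct H|].
  destruct H as [->|H].
  - apply Z.eqb_neq in Hc; rewrite Hc. apply Z.divide_mul_l, Z.divide_refl.
  - apply Z.divide_mul_r; auto.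
Qed.

Definition unit_lin x L t : lin :=
  ladd (lscale (L / Z.abs (lcoef x t)) (ldrop x t)) (lscale (Z.sgn (lcoef x t)) (lvar x)).

Lemma lcoef_unit_lin x L t : lcoef x (unit_lin x L t) = Z.sgn (lcoef x t).
Proof. unfold unit_lin; rewrite lcoef_add, !lcoef_scale, lcoef_drop, lcoef_var; lia. Qed.

Lemma leval_unit_lin e x L t v : lcoef x t <> 0 -> (Z.abs (lcoef x t) | L) ->
  leval (upd e x (L * v)) (unit_lin x L t) = L / Z.abs (lcoef x t) * leval (upd e x v) t.
Proof.
  intros Hc [z ->]. unfold unit_lin.
  rewrite Z.div_mul by lia.
  rewrite leval_add, !leval_scale, leval_var, upd_same, !leval_upd, lcoef_drop, ldrop_idem.
  assert (Hsgn : Z.sgn (lcoef x t) * Z.abs (lcoef x t) = lcoef x t)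
    by (destruct (lcoef x t); simpl; lia).
  replace (lcoef x t * v) with (Z.sgn (lcoef x t) * Z.abs (lcoef x t) * v)
    by now rewrite Hsgn.
  ring.
Qed.

Definition unit_atom x L (a : qf) : qf :=
  match a with
  | QLt t => if lcoef x t =? 0 then a else QLt (unit_lin x L t)
  | QDv k t => if lcoef x t =? 0 then a
      else QDv (k * Z.to_pos (L / Z.abs (lcoef x t))) (unit_lin x L t)
  | QNDv k t => if lcoef x t =? 0 then a
      else QNDv (k * Z.to_pos (L / Z.abs (lcoef x t))) (unit_lin x L t)
  | _ => a
  end.

Lemma Zdivide_pos_mul_cancel k m X : 0 < m ->
  (Z.pos (k * Z.to_pos m) | m * X) <-> (Z.pos k | X).
Proof.
  intro Hm. rewrite Pos2Z.inj_mul, Z2Pos.id, (Z.mul_comm m X) by lia.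
  apply Z.mul_divide_cancel_r. lia.
Qed.

Lemma qsem_unit_atom e x L a v : 0 < L -> isatom a ->
  (atom_coef x a <> 0 -> (Z.abs (atom_coef x a) | L)) ->
  (qsem (upd e x (L * v)) (unit_atom x L a) <-> qsem (upd e x v) a).
Proof.
  intros HL Ha Hd.
  destruct a; simpl in *; try tauto;
    (destruct (lcoef x t =? 0) eqn:E;
     [apply Z.eqb_eq in E; simpl; rewrite (leval_upd_indep _ _ _ v _ E); tauto|]);
    apply Z.eqb_neq in E; specialize (Hd E);
    assert (Hm : 0 < L / Z.abs (lcoef x t)) by
      (destruct Hd as [z Hz]; rewrite Hz, Z.div_mul by lia; nia);
    simpl; rewrite leval_unit_lin by auto.
  - split; intro; nia.
  - apply Zdivide_pos_mul_cancel; auto.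
  - rewrite Zdivide_pos_mul_cancel; tauto.
Qed.

Lemma unit_atom_coef x L a : isatom a -> -1 <= atom_coef x (unit_atom x L a) <= 1.
Proof.
  intro Ha; destruct a; cbn [unit_atom atom_coef] in *; try lia;
    destruct (lcoef x t =? 0) eqn:E; cbn [atom_coef];
    try (apply Z.eqb_eq in E; lia);
    rewrite lcoef_unit_lin; destruct (lcoef x t); simpl; lia.
Qed.

Lemma unit_atom_isatom x L a : isatom a -> atoms (unit_atom x L a) = [unit_atom x L a].
Proof.
  intro Ha; destruct a; simpl in *; try tauto; try reflexivity;
    destruct (lcoef x t =? 0); reflexivity.
Qed.

Lemma qsem_unit_atoms e x q v :
  qsem (upd e x (coef_prod x (atoms q) * v)) (qmap (unit_atom x (coef_prod x (atoms q))) q)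
  <-> qsem (upd e x v) q.
Proof.
  apply qmap_sem; intros a Ha. apply qsem_unit_atom.
  - apply coef_prod_pos.
  - eapply atoms_isatom; eauto.
  - intro; apply coef_prod_dvd; auto.
Qed.

(* Multiplying x by the common multiple L of its coefficients and recording [L | x]
   makes every coefficient of x equal to -1, 0 or 1. *)
Definition unitize x q : qf :=
  let L := coef_prod x (atoms q) in
  QAnd (QDv (Z.to_pos L) (lvar x)) (qmap (unit_atom x L) q).

Lemma unitize_sem e x q :
  (exists v, qsem (upd e x v) q) <-> (exists w, qsem (upd e x w) (unitize x q)).
Proof.
  assert (HL := coef_prod_pos x (atoms q)).
  unfold unitize; simpl; rewrite Z2Pos.id by exact HL. split.
  - intros [v Hv]. exists (coef_prod x (atoms q) * v).
    rewrite leval_var, upd_same. split.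
    + apply Z.divide_factor_l.
    + apply qsem_unit_atoms, Hv.
  - intros [w [[z Hz] Hw]]. rewrite leval_var, upd_same in Hz. subst w.
    exists z. apply qsem_unit_atoms. rewrite Z.mul_comm. exact Hw.
Qed.

Lemma unitize_unit_coefs x q : unit_coefs x (unitize x q).
Proof.
  intros a Ha; simpl in Ha; destruct Ha as [<-|Ha].
  - simpl; rewrite lcoef_var; lia.
  - apply atoms_qmap in Ha; [|apply unit_atom_isatom].
    destruct Ha as [a0 [Ha0 ->]]. apply unit_atom_coef. eapply atoms_isatom; eauto.
Qed.

Definition period (q : qf) : positive :=
  fold_right (fun a acc => match a with QDv k _ | QNDv k _ => k * acc | _ => acc end)%positive
    1%positive (atoms q).

Lemma period_dvd q k t :
  In (QDv k t) (atoms q) \/ In (QNDv k t) (atoms q) -> (Z.pos k | Z.pos (period q)).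
Proof.
  unfold period; induction (atoms q) as [|b l IH]; simpl; intros H; [tauto|].
  destruct H as [[->|H]|[->|H]];
    try (rewrite Pos2Z.inj_mul; apply Z.divide_mul_l, Z.divide_refl);
    destruct b; try (apply IH; tauto);
    rewrite Pos2Z.inj_mul; apply Z.divide_mul_r; apply IH; tauto.
Qed.

Lemma Zdivide_add_mul_r k D X Y : (k | D) -> ((k | X + Y * D) <-> (k | X)).
Proof.
  intro H; split; intro H1.
  - replace X with (X + Y * D - Y * D) by ring.
    apply Z.divide_sub_r; auto. apply Z.divide_mul_r; auto.
  - apply Z.divide_add_r; auto. apply Z.divide_mul_r; auto.
Qed.

Definition minus_inf_atom x (a : qf) : qf :=
  match a with
  | QLt t => if 0 <? lcoef x t then QF else if lcoef x t <? 0 then QT else a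
  | _ => a
  end.
Definition minus_inf x q := qmap (minus_inf_atom x) q.

Lemma minus_inf_periodic e x q v m :
  qsem (upd e x (v + m * Z.pos (period q))) (minus_inf x q) <-> qsem (upd e x v) (minus_inf x q).
Proof.
  apply qmap_congr; intros a Ha. assert (Hat := atoms_isatom _ _ Ha).
  destruct a; simpl in *; try tauto; rewrite ?leval_upd_shift.
  - destruct (0 <? lcoef x t) eqn:E1; simpl; try tauto.
    destruct (lcoef x t <? 0) eqn:E2; simpl; try tauto.
    apply Z.ltb_ge in E1; apply Z.ltb_ge in E2.
    rewrite leval_upd_shift. replace (lcoef x t) with 0 by lia. lia.
  - apply Zdivide_add_mul_r, (period_dvd q k t); auto.
  - rewrite Zdivide_add_mul_r; [tauto|]. apply (period_dvd q k t); auto.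
Qed.

Definition atom_rest e x (a : qf) : Z :=
  match a with QLt t => leval e (ldrop x t) | _ => 0 end.

(* Below this threshold every atom [0 < c x + r] with c <> 0 has a constant truth value. *)
Definition minus_inf_threshold e x q : Z :=
  fold_right (fun a acc => Z.min acc (- Z.abs (atom_rest e x a))) 0 (atoms q).

Lemma minus_inf_threshold_le e x q a :
  In a (atoms q) -> minus_inf_threshold e x q <= - Z.abs (atom_rest e x a).
Proof.
  unfold minus_inf_threshold; induction (atoms q) as [|b l IH]; simpl; intro H; [destruct H|].
  destruct H as [<-|H]; [lia|]. specialize (IH H). lia.
Qed.

Lemma minus_inf_agrees e x q v : v < minus_inf_threshold e x q ->
  (qsem (upd e x v) (minus_inf x q) <-> qsem (upd e x v) q).
Proof.
  intro Hv. apply qmap_sem; intros a Ha.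
  assert (Hz := minus_inf_threshold_le e x q a Ha). assert (Hat := atoms_isatom _ _ Ha).
  destruct a; simpl in *; try tauto.
  rewrite leval_upd.
  destruct (0 <? lcoef x t) eqn:E1; simpl.
  - apply Z.ltb_lt in E1. split; [tauto|]. intro. nia.
  - destruct (lcoef x t <? 0) eqn:E2; simpl.
    + apply Z.ltb_lt in E2. split; [|tauto]. intro. nia.
    + rewrite leval_upd. tauto.
Qed.

Definition lower_bounds x q : list lin :=
  flat_map (fun a => match a with
    | QLt t => if lcoef x t =? 1 then [lneg (ldrop x t)] else []
    | _ => [] end) (atoms q).

Lemma cooper_descent e x q v : unit_coefs x q ->
  (forall b j, In b (lower_bounds x q) -> 1 <= j <= Z.pos (period q) -> v <> leval e b + j) ->
  qsem (upd e x v) q -> qsem (upd e x (v - Z.pos (period q))) q.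
Proof.
  intros Hu Hb. apply qsem_mono; intros a Ha.
  specialize (Hu a Ha). assert (Hat := atoms_isatom _ _ Ha).
  assert (Hshift : forall t, leval (upd e x (v - Z.pos (period q))) t
                             = leval (upd e x v) t + lcoef x t * -1 * Z.pos (period q))
    by (intro t; rewrite <- leval_upd_shift; f_equal; f_equal; lia).
  destruct a; simpl in *; try tauto; rewrite Hshift.
  - rewrite !leval_upd. destruct (Z.eq_dec (lcoef x t) 1) as [E|E].
    + intro H. apply Z.nle_gt; intro Hle.
      apply (Hb (lneg (ldrop x t)) (v + leval e (ldrop x t))).
      * unfold lower_bounds. apply in_flat_map. exists (QLt t).
        split; auto. rewrite E; simpl; auto.
      * rewrite E in *. lia.
      * rewrite leval_neg. ring.
    + intro. nia.
  - rewrite Zdivide_add_mul_r; [tauto|]. apply (period_dvd q k t); auto.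
  - rewrite Zdivide_add_mul_r; [tauto|]. apply (period_dvd q k t); auto.
Qed.

Definition Zrange1 (D : positive) : list Z :=
  map (fun n => Z.of_nat n + 1) (seq 0 (Pos.to_nat D)).

Lemma in_Zrange1 j D : In j (Zrange1 D) <-> 1 <= j <= Z.pos D.
Proof.
  unfold Zrange1; rewrite in_map_iff. split.
  - intros [n [<- Hn]]. apply in_seq in Hn. lia.
  - intro H. exists (Z.to_nat (j - 1)). split; [lia|]. apply in_seq. lia.
Qed.

Definition cooper x q : qf :=
  QOr (bigor (map (fun j => qsubst x (lconst j) (minus_inf x q)) (Zrange1 (period q))))
      (bigor (flat_map (fun b => map (fun j => qsubst x (ladd b (lconst j)) q)
                                     (Zrange1 (period q)))
                       (lower_bounds x q))).

Lemma cooper_sound e x q : qsem e (cooper x q) -> exists v, qsem (upd e x v) q.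
Proof.
  set (D := Z.pos (period q)).
  unfold cooper; simpl; rewrite !bigor_sem. intros [[a [Ha Hs]]|[a [Ha Hs]]].
  - apply in_map_iff in Ha; destruct Ha as [j [<- _]].
    apply qsubst_sem in Hs; rewrite leval_const in Hs.
    set (n := Z.abs j + Z.abs (minus_inf_threshold e x q) + 1).
    exists (j + - n * D). apply minus_inf_agrees.
    + unfold n, D; nia.
    + apply minus_inf_periodic, Hs.
  - apply in_flat_map in Ha; destruct Ha as [b [_ Ha]].
    apply in_map_iff in Ha; destruct Ha as [j [<- _]].
    apply qsubst_sem in Hs. eauto.
Qed.

Lemma minus_inf_witness e x q v :
  (forall n : nat, qsem (upd e x (v - Z.of_nat n * Z.pos (period q))) q) ->
  exists j, 1 <= j <= Z.pos (period q) /\ qsem (upd e x j) (minus_inf x q).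
Proof.
  intro Hall. set (D := Z.pos (period q)). set (T := minus_inf_threshold e x q).
  set (w := v - Z.of_nat (Z.to_nat (Z.abs v + Z.abs T + 1)) * D).
  assert (Hw : w < T) by (unfold w, D; nia).
  assert (Hm : qsem (upd e x w) (minus_inf x q)) by (apply minus_inf_agrees, Hall; exact Hw).
  exists ((w - 1) mod D + 1). split.
  - pose proof (Z.mod_pos_bound (w - 1) D). lia.
  - apply (minus_inf_periodic _ _ _ _ ((w - 1) / D)).
    replace ((w - 1) mod D + 1 + (w - 1) / D * Z.pos (period q)) with w; [exact Hm|].
    fold D. pose proof (Z.div_mod (w - 1) D). lia.
Qed.

Lemma cooper_complete e x q : unit_coefs x q ->
  (exists v, qsem (upd e x v) q) -> qsem e (cooper x q).
Proof.
  intros Hu [v Hv]. unfold cooper; simpl; rewrite !bigor_sem.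
  destruct (classic (exists b j, In b (lower_bounds x q) /\ 1 <= j <= Z.pos (period q) /\
                                 qsem (upd e x (leval e b + j)) q))
    as [[b [j [Hb [Hj Hq]]]]|Hno].
  - right. exists (qsubst x (ladd b (lconst j)) q). split.
    + apply in_flat_map. exists b. split; auto.
      apply in_map_iff. exists j. split; auto. apply in_Zrange1, Hj.
    + apply qsubst_sem. rewrite leval_add, leval_const. exact Hq.
  - left. destruct (minus_inf_witness e x q v) as [j [Hj Hm]].
    + induction n as [|n IH].
      * replace (v - Z.of_nat 0 * Z.pos (period q)) with v by lia. exact Hv.
      * replace (v - Z.of_nat (S n) * Z.pos (period q))
          with (v - Z.of_nat n * Z.pos (period q) - Z.pos (period q)) by lia.
        apply cooper_descent; auto.
        intros b j Hb Hj Heq. apply Hno. exists b, j. rewrite <- Heq. auto.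
    + exists (qsubst x (lconst j) (minus_inf x q)). split.
      * apply in_map_iff. exists j. split; auto. apply in_Zrange1, Hj.
      * apply qsubst_sem. rewrite leval_const. exact Hm.
Qed.

Definition qelim x q : qf := cooper x (unitize x q).

Lemma qelim_sem e x q : (exists v, qsem (upd e x v) q) <-> qsem e (qelim x q).
Proof.
  split; intro H.
  - apply cooper_complete; [apply unitize_unit_coefs | apply (unitize_sem e x q), H].
  - apply (unitize_sem e x q), cooper_sound, H.
Qed.

Fixpoint lin_of_term (t : term) : lin :=
  match t with
  | TVar i => lvar i
  | TZero => lconst 0
  | TOne => lconst 1
  | TAdd a b => ladd (lin_of_term a) (lin_of_term b)
  | TOpp a => lneg (lin_of_term a)
  end.

Lemma leval_lin_of_term (e : nat -> Z) t : leval e (lin_of_term t) = eval Zstruct e t.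
Proof.
  induction t; simpl;
    rewrite ?leval_var, ?leval_const, ?leval_add, ?leval_neg; congruence.
Qed.

Fixpoint qe (phi : form) : qf :=
  match phi with
  | FEq a b => let d := ladd (lin_of_term a) (lneg (lin_of_term b)) in
      QAnd (QLt (ladd (lconst 1) d)) (QLt (ladd (lconst 1) (lneg d)))
  | FLt a b => QLt (ladd (lin_of_term b) (lneg (lin_of_term a)))
  | FBot => QF
  | FNot p => qneg (qe p)
  | FAnd p q => QAnd (qe p) (qe q)
  | FOr p q => QOr (qe p) (qe q)
  | FImp p q => QOr (qneg (qe p)) (qe q)
  | FAll i p => qneg (qelim i (qneg (qe p)))
  | FEx i p => qelim i (qe p)
  end.

Lemma qe_sem phi : forall e : nat -> Z, qsem e (qe phi) <-> sat Zstruct e phi.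
Proof.
  induction phi; intro e; cbn [sat qe qsem];
    repeat rewrite ?qneg_sem, ?leval_add, ?leval_neg, ?leval_const, ?leval_lin_of_term.
  - change (car Zstruct) with Z. lia.
  - change (s_lt Zstruct) with Z.lt. lia.
  - tauto.
  - rewrite IHphi. tauto.
  - rewrite IHphi1, IHphi2. tauto.
  - rewrite IHphi1, IHphi2. tauto.
  - rewrite IHphi1, IHphi2. tauto.
  - rewrite <- qelim_sem. setoid_rewrite qneg_sem. setoid_rewrite IHphi.
    split; [intros H x; apply NNPP; eauto | intros H [x Hx]; auto].
  - rewrite <- qelim_sem. setoid_rewrite IHphi. tauto.
Qed.

Close Scope Z_scope.

(** * Quantifier elimination in models of Presburger arithmetic *)

Fixpoint term_bound (t : term) : nat :=
  match t with
  | TVar i => S i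
  | TZero | TOne => 0
  | TAdd a b => Nat.max (term_bound a) (term_bound b)
  | TOpp a => term_bound a
  end.

Fixpoint form_bound (p : form) : nat :=
  match p with
  | FEq a b | FLt a b => Nat.max (term_bound a) (term_bound b)
  | FBot => 0
  | FNot p => form_bound p
  | FAnd p q | FOr p q | FImp p q => Nat.max (form_bound p) (form_bound q)
  | FAll i p | FEx i p => Nat.max (S i) (form_bound p)
  end.

Lemma eval_ext (S : Lstruct) e e' t :
  (forall i, i < term_bound t -> e i = e' i) -> eval S e t = eval S e' t.
Proof.
  induction t; cbn [eval term_bound]; intro H; try reflexivity.
  - apply H; lia.
  - rewrite IHt1, IHt2; auto; intros; apply H; lia.
  - rewrite IHt; auto.
Qed.

Lemma sat_ext (S : Lstruct) p : forall e e',
  (forall i, i < form_bound p -> e i = e' i) -> (sat S e p <-> sat S e' p).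
Proof.
  induction p; cbn [sat form_bound]; intros e e' H;
    try (assert (Hx : forall x, sat S (upd e n x) p <-> sat S (upd e' n x) p)
           by (intro x; apply IHp; intros i Hi; unfold upd;
               destruct (Nat.eqb i n); auto; apply H; lia));
    try (rewrite (eval_ext S e e' t), (eval_ext S e e' t0) by (intros; apply H; lia));
    try (rewrite (IHp e e') by auto);
    try (rewrite (IHp1 e e'), (IHp2 e e') by (intros; apply H; lia));
    try tauto.
  - split; intros H1 x; apply Hx; auto.
  - split; intros [x H1]; exists x; apply Hx; auto.
Qed.

Lemma sat_pointwise (S : Lstruct) e e' p : (forall i, e i = e' i) -> (sat S e p <-> sat S e' p).
Proof. intro H; apply sat_ext; auto. Qed.

Fixpoint term_rename (r : nat -> nat) (t : term) : term :=
  match t with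
  | TVar i => TVar (r i)
  | TZero => TZero
  | TOne => TOne
  | TAdd a b => TAdd (term_rename r a) (term_rename r b)
  | TOpp a => TOpp (term_rename r a)
  end.

Fixpoint form_rename (r : nat -> nat) (p : form) : form :=
  match p with
  | FEq a b => FEq (term_rename r a) (term_rename r b)
  | FLt a b => FLt (term_rename r a) (term_rename r b)
  | FBot => FBot
  | FNot p => FNot (form_rename r p)
  | FAnd p q => FAnd (form_rename r p) (form_rename r q)
  | FOr p q => FOr (form_rename r p) (form_rename r q)
  | FImp p q => FImp (form_rename r p) (form_rename r q)
  | FAll i p => FAll (r i) (form_rename r p)
  | FEx i p => FEx (r i) (form_rename r p)
  end.

Lemma eval_rename (S : Lstruct) r e t : eval S e (term_rename r t) = eval S (fun i => e (r i)) t.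
Proof. induction t; simpl; congruence. Qed.

Lemma sat_rename (S : Lstruct) r p : (forall i j, r i = r j -> i = j) ->
  forall e, sat S e (form_rename r p) <-> sat S (fun i => e (r i)) p.
Proof.
  intro Hr; induction p; intro e; simpl; rewrite ?eval_rename;
    try (rewrite ?IHp, ?IHp1, ?IHp2; tauto);
    (assert (Hx : forall x, sat S (upd e (r n) x) (form_rename r p)
                            <-> sat S (upd (fun i => e (r i)) n x) p);
     [intro x; rewrite IHp; apply sat_pointwise; intro i; unfold upd;
      destruct (Nat.eqb i n) eqn:E1, (Nat.eqb (r i) (r n)) eqn:E2; auto;
      [apply Nat.eqb_eq in E1; subst; rewrite Nat.eqb_refl in E2; discriminate
      |apply Nat.eqb_eq, Hr in E2; subst; rewrite Nat.eqb_refl in E1; discriminate]|]).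
  - split; intros H x; apply Hx; auto.
  - split; intros [x H]; exists x; apply Hx; auto.
Qed.

Fixpoint form_bigor (l : list form) : form :=
  match l with [] => FBot | p :: l' => FOr p (form_bigor l') end.

Lemma sat_form_bigor (S : Lstruct) e l :
  sat S e (form_bigor l) <-> exists p, In p l /\ sat S e p.
Proof.
  induction l as [|p l IH]; simpl; [firstorder|].
  rewrite IH; split.
  - intros [H|[r [? ?]]]; eauto.
  - intros [r [[<-|H] H2]]; eauto.
Qed.

Definition env2 {T : Type} (x y : T) : nat -> T := fun i => match i with 0 => x | _ => y end.

Fixpoint term_nmul (n : nat) (t : term) : term :=
  match n with O => TZero | S n => TAdd t (term_nmul n t) end.

Definition term_zmul (z : Z) (t : term) : term :=
  match z with
  | Z0 => TZero
  | Zpos p => term_nmul (Pos.to_nat p) t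
  | Zneg p => TOpp (term_nmul (Pos.to_nat p) t)
  end.

Definition zmul (S : Lstruct) (z : Z) (y : S) : S := eval S (fun _ => y) (term_zmul z (TVar 0)).

Lemma eval_term_zmul (S : Lstruct) e z t : eval S e (term_zmul z t) = zmul S z (eval S e t).
Proof.
  assert (Hn : forall n, eval S e (term_nmul n t)
                         = eval S (fun _ => eval S e t) (term_nmul n (TVar 0)))
    by (induction n; simpl; congruence).
  unfold zmul; destruct z; simpl; rewrite ?Hn; reflexivity.
Qed.

Lemma zmul_Z z (y : Zstruct) : zmul Zstruct z y = (z * y)%Z.
Proof.
  assert (Hn : forall n, eval Zstruct (fun _ => y) (term_nmul n (TVar 0)) = (Z.of_nat n * y)%Z)
    by (induction n; cbn [term_nmul eval s_add Zstruct];
        [reflexivity | rewrite IHn, Nat2Z.inj_succ; change (car Zstruct) with Z; ring]).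
  unfold zmul; destruct z; cbn [term_zmul eval s_opp Zstruct]; rewrite ?Hn, ?positive_nat_Z;
    [reflexivity | reflexivity | symmetry; apply (Z.mul_opp_l (Z.pos p))].
Qed.

Definition term_of_lin (t : lin) : term :=
  fold_right (fun p acc => TAdd (term_zmul (snd p) (TVar (fst p))) acc)
    (term_zmul (fst t) TOne) (snd t).

Lemma eval_term_of_lin_Z (e : nat -> Z) t : eval Zstruct e (term_of_lin t) = leval e t.
Proof.
  destruct t as [c l]; unfold term_of_lin, leval; simpl.
  induction l as [|[i a] l IH]; simpl; rewrite eval_term_zmul, zmul_Z; simpl in *; lia.
Qed.

Lemma eval_term_of_lin_ext (S : Lstruct) e e' t :
  (forall p, In p (snd t) -> e (fst p) = e' (fst p)) ->
  eval S e (term_of_lin t) = eval S e' (term_of_lin t).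
Proof.
  destruct t as [c l]; unfold term_of_lin; simpl.
  induction l as [|p l IH]; simpl; intro H; rewrite !eval_term_zmul; [reflexivity|].
  simpl; rewrite H by auto. f_equal. apply IH; auto.
Qed.

Definition FDvd (k : Z) (t : term) : form :=
  FEx (term_bound t) (FEq (term_zmul k (TVar (term_bound t))) t).

Lemma sat_FDvd (S : Lstruct) e k t :
  sat S e (FDvd k t) <-> exists y, zmul S k y = eval S e t.
Proof.
  unfold FDvd; cbn [sat]. setoid_rewrite eval_term_zmul. cbn [eval].
  setoid_rewrite upd_same.
  split; intros [y Hy]; exists y; rewrite Hy; apply eval_ext; intros i Hi;
    rewrite upd_other; auto; lia.
Qed.

Fixpoint form_of_qf (q : qf) : form :=
  match q with
  | QT => FNot FBot
  | QF => FBot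
  | QLt t => FLt TZero (term_of_lin t)
  | QDv k t => FDvd (Z.pos k) (term_of_lin t)
  | QNDv k t => FNot (FDvd (Z.pos k) (term_of_lin t))
  | QAnd a b => FAnd (form_of_qf a) (form_of_qf b)
  | QOr a b => FOr (form_of_qf a) (form_of_qf b)
  end.

Lemma sat_form_of_qf_Z (e : nat -> Z) q : sat Zstruct e (form_of_qf q) <-> qsem e q.
Proof.
  assert (Hdvd : forall k t, sat Zstruct e (FDvd (Z.pos k) (term_of_lin t))
                             <-> (Z.pos k | leval e t)%Z).
  { intros k t. rewrite sat_FDvd, eval_term_of_lin_Z.
    split; intros [y Hy]; exists y; rewrite zmul_Z in *;
      [rewrite <- Hy | rewrite Hy]; apply Z.mul_comm. }
  induction q; cbn [form_of_qf sat qsem]; rewrite ?Hdvd, ?IHq1, ?IHq2; try tauto.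
  rewrite eval_term_of_lin_Z; reflexivity.
Qed.

Lemma Presburger_qe (S : Lstruct) : Presburger_model S ->
  forall e phi, sat S e phi <-> sat S e (form_of_qf (qe phi)).
Proof.
  intros HS e phi.
  apply (HS (FAnd (FImp phi (form_of_qf (qe phi))) (FImp (form_of_qf (qe phi)) phi))).
  intro e'; simpl. rewrite sat_form_of_qf_Z, qe_sem. tauto.
Qed.

Ltac simpl_Z := cbn [sat eval s_lt s_add s_opp s_zero s_one Zstruct car upd] in *.

Section PresburgerFacts.
Variables (S : Lstruct) (PS : Presburger_model S).

Lemma pres_lt_trichotomy (x y : S) : s_lt S x y \/ x = y \/ s_lt S y x.
Proof.
  apply (PS (FOr (FLt (TVar 0) (TVar 1)) (FOr (FEq (TVar 0) (TVar 1)) (FLt (TVar 1) (TVar 0)))))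
    with (e := env2 x y).
  intro e; simpl_Z; lia.
Qed.

Lemma pres_lt_trans (x y z : S) : s_lt S x y -> s_lt S y z -> s_lt S x z.
Proof.
  apply (PS (FImp (FLt (TVar 0) (TVar 1)) (FImp (FLt (TVar 1) (TVar 2)) (FLt (TVar 0) (TVar 2)))))
    with (e := fun i => match i with 0 => x | 1 => y | _ => z end).
  intro e; simpl_Z; lia.
Qed.

Lemma pres_lt_irrefl (x : S) : ~ s_lt S x x.
Proof.
  apply (PS (FNot (FLt (TVar 0) (TVar 0)))) with (e := fun _ => x).
  intro e; simpl_Z; lia.
Qed.

Lemma pres_lt_succ (x y : S) :
  s_lt S x y -> s_add S x (s_one S) = y \/ s_lt S (s_add S x (s_one S)) y.
Proof.
  apply (PS (FImp (FLt (TVar 0) (TVar 1))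
                  (FOr (FEq (TAdd (TVar 0) TOne) (TVar 1)) (FLt (TAdd (TVar 0) TOne) (TVar 1)))))
    with (e := env2 x y).
  intro e; simpl_Z; lia.
Qed.

Lemma pres_add_pos (x y : S) : s_lt S (s_opp S x) y -> s_lt S (s_zero S) (s_add S x y).
Proof.
  apply (PS (FImp (FLt (TOpp (TVar 0)) (TVar 1)) (FLt TZero (TAdd (TVar 0) (TVar 1)))))
    with (e := env2 x y).
  intro e; simpl_Z; lia.
Qed.

Lemma pres_add_nonpos (x y : S) : s_lt S y (s_opp S x) -> ~ s_lt S (s_zero S) (s_add S x y).
Proof.
  apply (PS (FImp (FLt (TVar 1) (TOpp (TVar 0))) (FNot (FLt TZero (TAdd (TVar 0) (TVar 1))))))
    with (e := env2 x y).
  intro e; simpl_Z; lia.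
Qed.

Lemma pres_div_mod (k : positive) (x : S) : exists w r, r < Pos.to_nat k /\
  x = s_add S (zmul S (Z.pos k) w) (zmul S (Z.of_nat r) (s_one S)).
Proof.
  set (G := fun r : nat =>
              FEq (TVar 0) (TAdd (term_zmul (Z.pos k) (TVar 1)) (term_zmul (Z.of_nat r) TOne))).
  set (Phi := FEx 1 (form_bigor (map G (seq 0 (Pos.to_nat k))))).
  assert (HZ : forall e : nat -> Zstruct, sat Zstruct e Phi).
  { intro e. unfold Phi; cbn [sat]. exists (e O / Z.pos k)%Z.
    apply sat_form_bigor. exists (G (Z.to_nat (e O mod Z.pos k))).
    pose proof (Z.mod_pos_bound (e O) (Z.pos k)). pose proof (Z.div_mod (e O) (Z.pos k)).
    split; [apply in_map, in_seq; lia|].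
    unfold G; cbn [sat eval]; rewrite !eval_term_zmul, !zmul_Z. simpl_Z.
    rewrite upd_same, upd_other, Z2Nat.id by lia. lia. }
  assert (HS := PS Phi HZ (fun _ => x)).
  unfold Phi in HS; cbn [sat] in HS. destruct HS as [w HS].
  apply sat_form_bigor in HS. destruct HS as [p [Hp Hg]].
  apply in_map_iff in Hp. destruct Hp as [r [<- Hr]].
  exists w, r. apply in_seq in Hr. split; [lia|].
  unfold G in Hg; cbn [sat eval] in Hg; rewrite !eval_term_zmul in Hg. exact Hg.
Qed.

Lemma pres_dvd_shift (k : positive) (r : Z) (u w : S) :
  (exists y, zmul S (Z.pos k) y
             = s_add S u (s_add S (zmul S (Z.pos k) w) (zmul S r (s_one S)))) <->
  (exists y, zmul S (Z.pos k) y = s_add S u (zmul S r (s_one S))).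
Proof.
  set (D1 := FDvd (Z.pos k)
               (TAdd (TVar 0) (TAdd (term_zmul (Z.pos k) (TVar 1)) (term_zmul r TOne)))).
  set (D2 := FDvd (Z.pos k) (TAdd (TVar 0) (term_zmul r TOne))).
  assert (H := PS (FAnd (FImp D1 D2) (FImp D2 D1))).
  specialize (H ltac:(intro e; cbn [sat]; unfold D1, D2; rewrite !sat_FDvd; cbn [eval];
                      rewrite !eval_term_zmul, !zmul_Z; simpl_Z;
                      split; intros [y Hy]; rewrite zmul_Z in Hy;
                      [exists (y - e 1%nat)%Z | exists (y + e 1%nat)%Z]; rewrite zmul_Z; lia)
                (env2 u w)).
  cbn [sat] in H; unfold D1, D2 in H; rewrite !sat_FDvd in H.
  cbn [eval] in H; rewrite !eval_term_zmul in H. exact H.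
Qed.

Definition lin_lo (n : nat) (t : lin) : lin := (0%Z, filter (fun p => Nat.ltb (fst p) n) (snd t)).
Definition lin_hi (n : nat) (t : lin) : lin :=
  (fst t, filter (fun p => negb (Nat.ltb (fst p) n)) (snd t)).

Lemma pres_lin_split n t (e : nat -> S) :
  eval S e (term_of_lin t)
  = s_add S (eval S e (term_of_lin (lin_lo n t))) (eval S e (term_of_lin (lin_hi n t))).
Proof.
  apply (PS (FEq (term_of_lin t) (TAdd (term_of_lin (lin_lo n t)) (term_of_lin (lin_hi n t))))).
  intro e'; cbn [sat eval]; rewrite !eval_term_of_lin_Z.
  unfold leval, lin_lo, lin_hi; simpl; change (s_add Zstruct) with Z.add.
  induction (snd t) as [|[i a] l IH]; simpl; [lia|].
  destruct (Nat.ltb i n); simpl; lia.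
Qed.

End PresburgerFacts.

(** * End extensions are stably embedded *)

Lemma elementary_map_eval (M N : Lstruct) (f : M -> N) : elementary_map M N f ->
  forall e t, eval N (fun i => f (e i)) t = f (eval M e t).
Proof.
  intros Hel e t. set (j := term_bound t). set (e' := upd e j (eval M e t)).
  assert (H : sat M e' (FEq t (TVar j))).
  { simpl. unfold e'. rewrite upd_same. apply eval_ext; intros; apply upd_other; unfold j; lia. }
  apply Hel in H; simpl in H.
  rewrite (eval_ext N _ (fun i => f (e i))) in H.
  - rewrite H. unfold e'. now rewrite upd_same.
  - intros i Hi. unfold e'. rewrite upd_other; auto. unfold j; lia.
Qed.

Lemma elementary_map_opp (M N : Lstruct) (f : M -> N) : elementary_map M N f ->
  forall u, f (s_opp M u) = s_opp N (f u).
Proof.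
  intros Hel u. symmetry. exact (elementary_map_eval M N f Hel (fun _ => u) (TOpp (TVar 0))).
Qed.

Lemma elementary_map_succ (M N : Lstruct) (f : M -> N) : elementary_map M N f ->
  forall u, f (s_add M u (s_one M)) = s_add N (f u) (s_one N).
Proof.
  intros Hel u. symmetry.
  exact (elementary_map_eval M N f Hel (fun _ => u) (TAdd (TVar 0) TOne)).
Qed.

Section EndExtensionStablyEmbedded.
Variables (M N : Lstruct) (f : M -> N).
Hypotheses (PN : Presburger_model N) (Hel : elementary_map M N f)
  (Hend : end_extension M N f).
Variables (n : nat) (b : nat -> N).

Definition trace_definable (q : qf) : Prop :=
  exists (psi : form) (c : nat -> M), forall a : nat -> M,
    sat N (merge n (fun i => f (a i)) b) (form_of_qf q) <-> sat M (merge n a c) psi.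

(* The parameters of psi2 are shifted past those of psi1, so one valuation serves both. *)
Lemma trace_definable_common_params q1 q2 : trace_definable q1 -> trace_definable q2 ->
  exists psi1 psi2 c, forall a,
    (sat N (merge n (fun i => f (a i)) b) (form_of_qf q1) <-> sat M (merge n a c) psi1) /\
    (sat N (merge n (fun i => f (a i)) b) (form_of_qf q2) <-> sat M (merge n a c) psi2).
Proof.
  intros [psi1 [c1 H1]] [psi2 [c2 H2]].
  set (K := form_bound psi1).
  set (r := fun i => if Nat.ltb i n then i else i + K).
  set (c := fun i => if Nat.ltb i K then c1 i else c2 (i - K)).
  exists psi1, (form_rename r psi2), c. intro a. split.
  - rewrite H1. apply sat_ext. intros i Hi. unfold merge, c.
    destruct (Nat.ltb i n); auto. now rewrite (proj2 (Nat.ltb_lt i K) Hi).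
  - rewrite H2, sat_rename.
    + apply sat_pointwise. intro i. unfold merge, r, c.
      destruct (Nat.ltb i n) eqn:E; [now rewrite E|].
      apply Nat.ltb_ge in E.
      replace (Nat.ltb (i + K) n) with false by (symmetry; apply Nat.ltb_ge; lia).
      replace (Nat.ltb (i + K) K) with false by (symmetry; apply Nat.ltb_ge; lia).
      f_equal. lia.
    + intros i j. unfold r.
      destruct (Nat.ltb i n) eqn:E1, (Nat.ltb j n) eqn:E2;
        rewrite ?Nat.ltb_lt, ?Nat.ltb_ge in *; lia.
Qed.

Lemma trace_definable_and q1 q2 :
  trace_definable q1 -> trace_definable q2 -> trace_definable (QAnd q1 q2).
Proof.
  intros H1 H2. destruct (trace_definable_common_params _ _ H1 H2) as [p1 [p2 [c H]]].
  exists (FAnd p1 p2), c. intro a. simpl. destruct (H a) as [-> ->]. tauto.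
Qed.

Lemma trace_definable_or q1 q2 :
  trace_definable q1 -> trace_definable q2 -> trace_definable (QOr q1 q2).
Proof.
  intros H1 H2. destruct (trace_definable_common_params _ _ H1 H2) as [p1 [p2 [c H]]].
  exists (FOr p1 p2), c. intro a. simpl. destruct (H a) as [-> ->]. tauto.
Qed.

Lemma eval_merge_lin t (a c : nat -> M) :
  eval N (merge n (fun i => f (a i)) b) (term_of_lin t) =
  s_add N (f (eval M (merge n a c) (term_of_lin (lin_lo n t))))
          (eval N b (term_of_lin (lin_hi n t))).
Proof.
  rewrite (pres_lin_split N PN n). f_equal.
  - rewrite <- (elementary_map_eval M N f Hel). apply eval_term_of_lin_ext. intros p Hp.
    apply filter_In in Hp. destruct Hp as [_ Hp]. unfold merge. now rewrite Hp.
  - apply eval_term_of_lin_ext. intros p Hp.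
    apply filter_In in Hp. destruct Hp as [_ Hp]. unfold merge.
    destruct (Nat.ltb (fst p) n); simpl in Hp; congruence.
Qed.

(* The parameter part s of the atom [0 < t(a) + s] lies in M, above M or below M. *)
Lemma trace_definable_lt t : trace_definable (QLt t).
Proof.
  set (s := eval N b (term_of_lin (lin_hi n t))).
  destruct (Hend s) as [[m Hm]|[Habove|Hbelow]].
  - exists (FLt TZero (TAdd (term_of_lin (lin_lo n t)) (TVar n))), (fun _ => m). intro a.
    rewrite (Hel _ (merge n a (fun _ => m))). cbn [form_of_qf sat eval].
    rewrite (eval_merge_lin t a (fun _ => m)), !(elementary_map_eval M N f Hel).
    fold s. rewrite <- Hm. unfold merge at 3. now rewrite Nat.ltb_irrefl.
  - exists (FNot FBot), (fun _ => s_zero M). intro a. cbn [form_of_qf sat eval].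
    rewrite (eval_merge_lin t a (fun _ => s_zero M)). fold s.
    split; [tauto|]. intros _. apply (pres_add_pos N PN).
    rewrite <- (elementary_map_opp M N f Hel). apply Habove.
  - exists FBot, (fun _ => s_zero M). intro a. cbn [form_of_qf sat eval].
    rewrite (eval_merge_lin t a (fun _ => s_zero M)). fold s.
    split; [|tauto]. apply (pres_add_nonpos N PN).
    rewrite <- (elementary_map_opp M N f Hel). apply Hbelow.
Qed.

(* Writing the parameter part as s = k w + r with 0 <= r < k, [k | t(a) + s] iff [k | t(a) + r]. *)
Lemma trace_definable_dvd_core (k : positive) t : exists psi, forall a c,
  (exists y, zmul N (Z.pos k) y = eval N (merge n (fun i => f (a i)) b) (term_of_lin t)) <->
  sat M (merge n a c) psi.
Proof.
  set (s := eval N b (term_of_lin (lin_hi n t))).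
  destruct (pres_div_mod N PN k s) as [w [r [Hr Hs]]].
  exists (FDvd (Z.pos k) (TAdd (term_of_lin (lin_lo n t)) (term_zmul (Z.of_nat r) TOne))).
  intros a c.
  rewrite (Hel _ (merge n a c)), sat_FDvd. cbn [eval].
  rewrite eval_term_zmul, (elementary_map_eval M N f Hel), (eval_merge_lin t a c).
  fold s. rewrite Hs. cbn [eval]. apply (pres_dvd_shift N PN).
Qed.

Lemma trace_definable_dvd k t : trace_definable (QDv k t).
Proof.
  destruct (trace_definable_dvd_core k t) as [psi H].
  exists psi, (fun _ => s_zero M). intro a. cbn [form_of_qf]. rewrite sat_FDvd. apply H.
Qed.

Lemma trace_definable_ndvd k t : trace_definable (QNDv k t).
Proof.
  destruct (trace_definable_dvd_core k t) as [psi H].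
  exists (FNot psi), (fun _ => s_zero M). intro a.
  cbn [form_of_qf sat]. rewrite sat_FDvd, (H a (fun _ => s_zero M)). tauto.
Qed.

Lemma trace_definable_qf q : trace_definable q.
Proof.
  induction q.
  - exists (FNot FBot), (fun _ => s_zero M). intro. simpl. tauto.
  - exists FBot, (fun _ => s_zero M). intro. simpl. tauto.
  - apply trace_definable_lt.
  - apply trace_definable_dvd.
  - apply trace_definable_ndvd.
  - apply trace_definable_and; auto.
  - apply trace_definable_or; auto.
Qed.

End EndExtensionStablyEmbedded.

Theorem end_extension_stably_embedded (M N : Lstruct) (f : M -> N) :
  Presburger_model N -> elementary_map M N f ->
  end_extension M N f -> stably_embedded M N f.
Proof.
  intros PN Hel Hend n phi b.
  destruct (trace_definable_qf M N f PN Hel Hend n b (qe phi)) as [psi [c H]].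
  exists psi, c. intro a. rewrite (Presburger_qe N PN). apply H.
Qed.

(** * Stably embedded pairs are end extensions *)

Lemma Z_discrete_ivt (R : Z -> Prop) a b :
  (a < b)%Z -> R a -> ~ R b -> exists m, R m /\ ~ R (m + 1)%Z.
Proof.
  intros Hab Ha Hb.
  assert (Hd : exists d : nat, Z.of_nat d = (b - a)%Z) by (exists (Z.to_nat (b - a)); lia).
  destruct Hd as [d Hd]. revert a Hd Hab Ha.
  induction d as [|d IH]; intros a Hd Hab Ha; [lia|].
  destruct (classic (R (a + 1)%Z)) as [H|H]; [|eauto].
  apply (IH (a + 1)%Z); auto; [lia|].
  destruct (Z.eq_dec (a + 1) b) as [<-|E]; [contradiction | lia].
Qed.

Definition form_at0 (psi : form) (t : term) : form := FEx 0 (FAnd (FEq (TVar 0) t) psi).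

Lemma sat_form_at0 (S : Lstruct) e psi t :
  (forall x, eval S (upd e 0 x) t = eval S e t) ->
  (sat S e (form_at0 psi t) <-> sat S (upd e 0 (eval S e t)) psi).
Proof.
  intro Ht. unfold form_at0; cbn [sat eval]. split.
  - intros [x [Hx H]]. rewrite upd_same, Ht in Hx. now subst.
  - intro H. exists (eval S e t). now rewrite upd_same, Ht.
Qed.

Lemma sat_upd0_ext (S : Lstruct) psi (e e' : nat -> S) z :
  (forall i, 0 < i < form_bound psi -> e i = e' i) ->
  (sat S (upd e 0 z) psi <-> sat S (upd e' 0 z) psi).
Proof.
  intro H. apply sat_ext. intros i Hi. unfold upd.
  destruct (Nat.eqb i 0) eqn:E; auto. apply Nat.eqb_neq in E. apply H. lia.
Qed.

Ltac fresh_var_eval := intro; cbn [eval]; rewrite upd_other by lia; reflexivity.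

Lemma pres_discrete_ivt (S : Lstruct) (PS : Presburger_model S) psi (E : nat -> S) x1 x2 :
  s_lt S x1 x2 -> sat S (upd E 0 x1) psi -> ~ sat S (upd E 0 x2) psi ->
  exists m, sat S (upd E 0 m) psi /\ ~ sat S (upd E 0 (s_add S m (s_one S))) psi.
Proof.
  intros H12 H1 H2.
  (* Transfer from Z, with fresh variables B, B + 1 for the endpoints and B + 2 for m. *)
  set (B := form_bound psi + 1).
  set (Phi := FImp (FAnd (form_at0 psi (TVar B))
                         (FAnd (FNot (form_at0 psi (TVar (B + 1)))) (FLt (TVar B) (TVar (B + 1)))))
                   (FEx (B + 2) (FAnd (form_at0 psi (TVar (B + 2)))
                                      (FNot (form_at0 psi (TAdd (TVar (B + 2)) TOne)))))).
  assert (Hfresh : forall (T : Lstruct) (e : nat -> T) z,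
             (forall i, 0 < i < form_bound psi -> upd e (B + 2) z i = e i))
    by (intros; apply upd_other; unfold B; lia).
  assert (HZ : forall e : nat -> Zstruct, sat Zstruct e Phi).
  { intro e. unfold Phi; cbn [sat].
    rewrite !sat_form_at0 by fresh_var_eval. cbn [eval]. intros [Ha [Hb Hlt]].
    destruct (Z_discrete_ivt (fun z => sat Zstruct (upd e 0 z) psi) (e B) (e (B + 1)))
      as [m [Hm1 Hm2]]; auto.
    exists m. rewrite !sat_form_at0 by fresh_var_eval. cbn [eval]. rewrite upd_same.
    split; rewrite (sat_upd0_ext _ psi _ e) by apply Hfresh; assumption. }
  set (E' := upd (upd E B x1) (B + 1) x2).
  assert (HE' : forall i, 0 < i < form_bound psi -> E' i = E i)
    by (intros; unfold E'; rewrite !upd_other by (unfold B; lia); reflexivity).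
  assert (HS := PS Phi HZ E'). unfold Phi in HS; cbn [sat] in HS.
  rewrite !sat_form_at0 in HS by fresh_var_eval. cbn [eval] in HS.
  assert (EB : E' B = x1) by (unfold E'; rewrite upd_other, upd_same by lia; reflexivity).
  assert (EB1 : E' (B + 1) = x2) by (unfold E'; apply upd_same).
  rewrite EB, EB1, !(sat_upd0_ext _ psi E' E) in HS by exact HE'.
  destruct HS as [m [Hm1 Hm2]]; auto.
  exists m. rewrite !sat_form_at0 in Hm1, Hm2 by fresh_var_eval. cbn [eval] in Hm1, Hm2.
  rewrite upd_same, !(sat_upd0_ext _ psi _ E) in Hm1, Hm2
    by (intros i Hi; rewrite Hfresh by exact Hi; apply HE', Hi).
  auto.
Qed.

Lemma merge1_upd {T : Type} (z : T) c i : merge 1 (fun _ => z) c i = upd c 0 z i.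
Proof. unfold merge, upd. now destruct i. Qed.

Lemma stably_embedded_no_gap (M N : Lstruct) (f : M -> N) :
  Presburger_model M -> Presburger_model N -> elementary_map M N f -> stably_embedded M N f ->
  forall y xh xl, s_lt N (f xh) y -> s_lt N y (f xl) -> exists x, f x = y.
Proof.
  intros PM PN Hel Hst y xh xl Hh Hl.
  destruct (Hst 1 (FLt (TVar 0) (TVar 1)) (fun _ => y)) as [psi [c Hpc]].
  assert (HQ : forall z, s_lt N (f z) y <-> sat M (upd c 0 z) psi).
  { intro z. rewrite <- (sat_pointwise _ _ _ _ (merge1_upd z c)), <- (Hpc (fun _ => z)).
    reflexivity. }
  assert (Hlt : s_lt M xh xl).
  { apply (Hel (FLt (TVar 0) (TVar 1)) (env2 xh xl)). exact (pres_lt_trans N PN _ _ _ Hh Hl). }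
  destruct (pres_discrete_ivt M PM psi c xh xl Hlt) as [m [Hm1 Hm2]].
  - apply HQ, Hh.
  - rewrite <- HQ. intro H. exact (pres_lt_irrefl N PN y (pres_lt_trans N PN _ _ _ Hl H)).
  - rewrite <- HQ in Hm1, Hm2. rewrite (elementary_map_succ M N f Hel) in Hm2.
    exists (s_add M m (s_one M)). rewrite (elementary_map_succ M N f Hel).
    destruct (pres_lt_succ N PN _ _ Hm1); [assumption | contradiction].
Qed.

Theorem stably_embedded_end_extension (M N : Lstruct) (f : M -> N) :
  Presburger_model M -> Presburger_model N -> elementary_map M N f ->
  stably_embedded M N f -> end_extension M N f.
Proof.
  intros PM PN Hel Hst y.
  destruct (classic (exists x, f x = y)) as [|Hno]; [left; auto | right].
  destruct (classic (forall x, s_lt N (f x) y)) as [|Hnot_above]; [left; auto | right].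
  intro xh. apply not_all_ex_not in Hnot_above. destruct Hnot_above as [xl Hxl].
  assert (Hne : forall x, f x <> y) by (intros x Hx; eauto).
  destruct (pres_lt_trichotomy N PN (f xl) y) as [?|[?|Hl]];
    [contradiction | exfalso; eapply Hne; eauto |].
  destruct (pres_lt_trichotomy N PN y (f xh)) as [?|[?|Hh]];
    [assumption | exfalso; eapply Hne; eauto |].
  exfalso. apply Hno. exact (stably_embedded_no_gap M N f PM PN Hel Hst y xh xl Hh Hl).
Qed.

(** * An L_P-axiomatisation of stably embedded pairs *)

Definition tarski_vaught (N : Lstruct) (P : N -> Prop) : Prop :=
  forall i p (e : nat -> N), (forall j, j < form_bound p -> j <> i -> P (e j)) ->
    (exists x, sat N (upd e i x) p) -> exists x, P x /\ sat N (upd e i x) p.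

Section TarskiVaughtTest.
Variables (N : Lstruct) (P : N -> Prop).
Hypothesis HTV : tarski_vaught N P.

Lemma tarski_vaught_eval t (e : nat -> N) :
  (forall j, j < term_bound t -> P (e j)) -> P (eval N e t).
Proof.
  intro He. set (i := term_bound t).
  assert (Hupd : forall x, eval N (upd e i x) t = eval N e t)
    by (intro; apply eval_ext; intros; apply upd_other; unfold i; lia).
  destruct (HTV i (FEq (TVar i) t) e) as [x [Px Hx]].
  - intros j Hj Hji. apply He. cbn [form_bound term_bound] in Hj. unfold i in *. lia.
  - exists (eval N e t). simpl. now rewrite upd_same, Hupd.
  - simpl in Hx. rewrite upd_same, Hupd in Hx. now subst.
Qed.

Lemma tarski_vaught_zero : P (s_zero N).
Proof. exact (tarski_vaught_eval TZero (fun _ => s_zero N) ltac:(simpl; lia)). Qed.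

Lemma tarski_vaught_one : P (s_one N).
Proof. exact (tarski_vaught_eval TOne (fun _ => s_zero N) ltac:(simpl; lia)). Qed.

Lemma tarski_vaught_add x y : P x -> P y -> P (s_add N x y).
Proof.
  intros Hx Hy. apply (tarski_vaught_eval (TAdd (TVar 0) (TVar 1)) (env2 x y)).
  intros [|[|j]] Hj; simpl in *; auto; lia.
Qed.

Lemma tarski_vaught_opp x : P x -> P (s_opp N x).
Proof. intro Hx. apply (tarski_vaught_eval (TOpp (TVar 0)) (fun _ => x)). auto. Qed.

Definition Psub : Lstruct :=
  {| car := {y : N | P y};
     s_zero := exist _ (s_zero N) tarski_vaught_zero;
     s_one := exist _ (s_one N) tarski_vaught_one;
     s_add := fun x y => exist _ (s_add N (proj1_sig x) (proj1_sig y))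
                          (tarski_vaught_add _ _ (proj2_sig x) (proj2_sig y));
     s_opp := fun x => exist _ (s_opp N (proj1_sig x)) (tarski_vaught_opp _ (proj2_sig x));
     s_lt := fun x y => s_lt N (proj1_sig x) (proj1_sig y) |}.

Definition Psub_incl : Psub -> N := @proj1_sig N P.

Lemma eval_Psub e t : eval N (fun i => Psub_incl (e i)) t = Psub_incl (eval Psub e t).
Proof. induction t; simpl; rewrite ?IHt1, ?IHt2, ?IHt; reflexivity. Qed.

Lemma Psub_incl_upd (e : nat -> Psub) i x j :
  Psub_incl (upd e i x j) = upd (fun k => Psub_incl (e k)) i (Psub_incl x) j.
Proof. unfold upd. now destruct (Nat.eqb j i). Qed.

Lemma Psub_elementary : elementary_map Psub N Psub_incl.
Proof.
  intro phi. induction phi; intro e; cbn [sat]; rewrite ?eval_Psub;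
    try setoid_rewrite IHphi; try setoid_rewrite IHphi1; try setoid_rewrite IHphi2;
    try setoid_rewrite (sat_pointwise _ _ _ _ (Psub_incl_upd e n _)); try tauto.
  - split; [congruence|]. unfold Psub_incl.
    destruct (eval Psub e t), (eval Psub e t0); simpl. intros ->. f_equal. apply proof_irrelevance.
  - split; [|intros H x; apply H].
    intros H y. apply NNPP. intro Hy.
    destruct (HTV n (FNot phi) (fun k => Psub_incl (e k))) as [z [Pz Hz]].
    + intros j _ _. exact (proj2_sig (e j)).
    + exists y. exact Hy.
    + exact (Hz (H (exist _ z Pz))).
  - split; [intros [x Hx]; exists (Psub_incl x); exact Hx|].
    intro H. destruct (HTV n phi (fun k => Psub_incl (e k)) (fun j _ _ => proj2_sig (e j)) H)
      as [z [Pz Hz]].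
    exists (exist _ z Pz). exact Hz.
Qed.

End TarskiVaughtTest.

Lemma image_valuation (M N : Lstruct) (f : M -> N) (e : nat -> N) B i :
  (forall j, j < B -> j <> i -> exists x, f x = e j) ->
  exists e' : nat -> M, forall j, j < B -> j <> i -> f (e' j) = e j.
Proof.
  induction B as [|B IH]; intro H; [exists (fun _ => s_zero M); intros; lia|].
  destruct IH as [e' He']; [intros j Hj; apply H; lia|].
  destruct (Nat.eq_dec B i) as [->|Hi].
  - exists e'. intros j Hj Hji. apply He'; lia.
  - destruct (H B (Nat.lt_succ_diag_r B) Hi) as [x Hx].
    exists (upd e' B x). intros j Hj Hji.
    destruct (Nat.eq_dec j B) as [->|HjB]; [now rewrite upd_same|].
    rewrite upd_other by exact HjB. apply He'; lia.
Qed.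

Lemma elementary_image_tarski_vaught (M N : Lstruct) (f : M -> N) :
  elementary_map M N f -> tarski_vaught N (fun y => exists x, f x = y).
Proof.
  intros Hel i p e He [x Hx].
  destruct (image_valuation M N f e (form_bound p) i He) as [e' He'].
  assert (Hpull : forall y, sat N (upd e i y) p <-> sat N (upd (fun j => f (e' j)) i y) p).
  { intro y. apply sat_ext. intros j Hj. unfold upd.
    destruct (Nat.eqb j i) eqn:E; [reflexivity|].
    apply Nat.eqb_neq in E. symmetry. apply He'; auto. }
  assert (HM : sat M e' (FEx i p)) by (apply Hel; exists x; apply Hpull, Hx).
  destruct HM as [x' Hx'].
  exists (f x'). split; [eauto|].
  apply Hpull. apply Hel in Hx'. revert Hx'. apply sat_pointwise. intro j. unfold upd.
  now destruct (Nat.eqb j i).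
Qed.

Fixpoint formP_of_form (phi : form) : formP :=
  match phi with
  | FEq a b => PEq a b
  | FLt a b => PLt a b
  | FBot => PBot
  | FNot p => PNot (formP_of_form p)
  | FAnd p q => PAnd (formP_of_form p) (formP_of_form q)
  | FOr p q => POr (formP_of_form p) (formP_of_form q)
  | FImp p q => PImp (formP_of_form p) (formP_of_form q)
  | FAll i p => PAll i (formP_of_form p)
  | FEx i p => PEx i (formP_of_form p)
  end.

Lemma satP_formP_of_form (N : Lstruct) P phi : forall e,
  satP N P e (formP_of_form phi) <-> sat N e phi.
Proof.
  induction phi; intro e; simpl;
    try setoid_rewrite IHphi; try setoid_rewrite IHphi1; try setoid_rewrite IHphi2; tauto.
Qed.

Definition PMem_all (B i : nat) : formP :=
  fold_right (fun j acc => if Nat.eqb j i then acc else PAnd (PMem (TVar j)) acc)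
    (PNot PBot) (seq 0 B).

Lemma satP_PMem_all (N : Lstruct) P e B i :
  satP N P e (PMem_all B i) <-> (forall j, j < B -> j <> i -> P (e j)).
Proof.
  assert (G : forall s, satP N P e (fold_right (fun j acc => if Nat.eqb j i then acc
                                                            else PAnd (PMem (TVar j)) acc)
                                               (PNot PBot) s)
                        <-> (forall j, In j s -> j <> i -> P (e j))).
  { induction s as [|a s IH]; simpl; [firstorder|].
    destruct (Nat.eqb a i) eqn:E; simpl; rewrite IH.
    - apply Nat.eqb_eq in E; subst a. split.
      + intros H j [<-|Hj] Hne; [congruence | auto].
      + intros H j Hj; apply H; auto.
    - apply Nat.eqb_neq in E. split.
      + intros [Ha H] j [<-|Hj] Hne; auto.
      + intro H; split; auto. }
  unfold PMem_all. rewrite G.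
  split; intros H j Hj Hne; apply H; auto; apply in_seq in Hj || apply in_seq; lia.
Qed.

Definition tarski_vaught_ax (i : nat) (p : form) : formP :=
  PImp (PMem_all (form_bound p) i)
       (PImp (PEx i (formP_of_form p)) (PEx i (PAnd (PMem (TVar i)) (formP_of_form p)))).

Lemma satP_tarski_vaught_ax (N : Lstruct) P e i p : satP N P e (tarski_vaught_ax i p) <->
  ((forall j, j < form_bound p -> j <> i -> P (e j)) ->
   (exists x, sat N (upd e i x) p) -> exists x, P x /\ sat N (upd e i x) p).
Proof.
  unfold tarski_vaught_ax; cbn [satP eval].
  rewrite satP_PMem_all. setoid_rewrite satP_formP_of_form. setoid_rewrite upd_same. tauto.
Qed.

Definition end_extension_ax : formP :=
  PAll 0 (POr (PMem (TVar 0))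
              (POr (PAll 1 (PImp (PMem (TVar 1)) (PLt (TVar 1) (TVar 0))))
                   (PAll 1 (PImp (PMem (TVar 1)) (PLt (TVar 0) (TVar 1)))))).

Lemma satP_end_extension_ax (N : Lstruct) P e : satP N P e end_extension_ax <->
  (forall y, P y \/ (forall z, P z -> s_lt N z y) \/ (forall z, P z -> s_lt N y z)).
Proof. unfold end_extension_ax; cbn [satP eval]; unfold upd; simpl; tauto. Qed.

Inductive pair_axiom : formP -> Prop :=
| pair_axiom_presburger phi :
    (forall e : nat -> Zstruct, sat Zstruct e phi) -> pair_axiom (formP_of_form phi)
| pair_axiom_tarski_vaught i p : pair_axiom (tarski_vaught_ax i p)
| pair_axiom_end_extension : pair_axiom end_extension_ax.

Lemma pair_axioms_sound (M N : Lstruct) (f : M -> N) (P : N -> Prop) :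
  Presburger_model M -> Presburger_model N -> elementary_map M N f ->
  (forall y, P y <-> exists x, f x = y) -> stably_embedded M N f ->
  forall phi, pair_axiom phi -> forall e, satP N P e phi.
Proof.
  intros PM PN Hel HP Hst phi Hphi e.
  destruct Hphi as [phi Hphi| i p |].
  - apply satP_formP_of_form, PN, Hphi.
  - apply satP_tarski_vaught_ax. setoid_rewrite HP.
    apply (elementary_image_tarski_vaught M N f Hel).
  - apply satP_end_extension_ax. setoid_rewrite HP. intro y.
    destruct (stably_embedded_end_extension M N f PM PN Hel Hst y) as [H|[H|H]];
      [left; exact H | right; left | right; right]; intros z [x <-]; apply H.
Qed.

Lemma pair_axioms_complete (N : Lstruct) (P : N -> Prop) :
  (forall phi, pair_axiom phi -> forall e, satP N P e phi) ->
  Presburger_model N /\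
  exists (M : Lstruct) (f : M -> N),
    Presburger_model M /\ elementary_map M N f /\
    (forall y : N, P y <-> exists x : M, f x = y) /\ stably_embedded M N f.
Proof.
  intro HT.
  assert (PN : Presburger_model N)
    by (intros phi Hphi e; apply (satP_formP_of_form N P), HT; constructor; exact Hphi).
  assert (HTV : tarski_vaught N P)
    by (intros i p e; apply satP_tarski_vaught_ax, HT; constructor).
  assert (Hel := Psub_elementary N P HTV).
  split; [exact PN|]. exists (Psub N P HTV), (Psub_incl N P HTV).
  split; [intros phi Hphi e; apply Hel, PN, Hphi|].
  split; [exact Hel|]. split.
  - intro y. split; [intro Hy; exists (exist _ y Hy); reflexivity|].
    intros [x <-]. exact (proj2_sig x).
  - apply end_extension_stably_embedded; auto.
    assert (HE := HT _ pair_axiom_end_extension (fun _ => s_zero N)).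
    rewrite satP_end_extension_ax in HE.
    intro y. destruct (HE y) as [H|[H|H]].
    + left. exists (exist _ y H). reflexivity.
    + right; left. intro x. apply H, (proj2_sig x).
    + right; right. intro x. apply H, (proj2_sig x).
Qed.

Theorem corollary5p7 :
  (forall (M N : Lstruct) (f : M -> N),
      Presburger_model M -> Presburger_model N -> elementary_map M N f ->
      (stably_embedded M N f <-> end_extension M N f))
  /\
  (* the class of stably embedded pairs of models of Presburger arithmetic
     is elementary in L_P *)
  (exists T : formP -> Prop,
      forall (N : Lstruct) (P : N -> Prop),
        (forall phi : formP, T phi -> forall e : nat -> N, satP N P e phi)
        <->
        (Presburger_model N /\
         exists (M : Lstruct) (f : M -> N),
           Presburger_model M /\ elementary_map M N f /\
           (forall y : N, P y <-> exists x : M, f x = y) /\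
           stably_embedded M N f)).
Proof.
  split.
  - intros M N f PM PN Hel. split.
    + exact (stably_embedded_end_extension M N f PM PN Hel).
    + exact (end_extension_stably_embedded M N f PN Hel).
  - exists pair_axiom. intros N P. split.
    + apply pair_axioms_complete.
    + intros [PN [M [f [PM [Hel [HP Hst]]]]]].
      exact (pair_axioms_sound M N f P PM PN Hel HP Hst).
Qed.
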